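(* Let $E(\delta):=\big((\lfloor\delta^{-1}\rfloor+1)\delta-1\big)\log\lfloor\delta^{-1}\rfloor+\big(1-\lfloor\delta^{-1}\rfloor\delta\big)\log\big(\lfloor\delta^{-1}\rfloor+1\big)$ for $\delta\in(0,1]$ (base-2 logarithms). Then $$\max_{\delta\in(0,1]}\ \frac{E(\delta)+(1-\delta)}{2}=\frac{\log 80}{10},$$ attained at $\delta=1/5$. Consequently, with $I(m,t)$ the maximum number of $t$-element maximal independent sets in an $m$-vertex graph, $\sum_{t=1}^m\sqrt{I(m,t)}\,2^{(m-t)/2}=O^*(80^{m/10})=O(1.5500^m)$.
   Context: Logarithms are base 2. $I(m,t)=\lfloor m/t\rfloor^{(\lfloor m/t\rfloor+1)t-m}(\lfloor m/t\rfloor+1)^{m-\lfloor m/t\rfloor t}$. $O^*(f(m))$ means $O(m^c f(m))$ for some constant $c$. *)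

From Stdlib Require Import Reals Lra Lia List.
Open Scope R_scope.

Definition log2 (x : R) : R := ln x / ln 2.

Definition floorR (x : R) : Z := Int_part x.

Definition E (d : R) : R :=
  let k := IZR (floorR (/ d)) in
  ((k + 1) * d - 1) * log2 k + (1 - k * d) * log2 (k + 1).

Definition obj (d : R) : R := (E d + (1 - d)) / 2.

Definition Imt (m t : nat) : nat :=
  let q := Nat.div m t in
  (q ^ ((q + 1) * t - m) * (q + 1) ^ (m - q * t))%nat.

Definition Ssum (m : nat) : R :=
  fold_right Rplus 0
    (map (fun t => sqrt (INR (Imt m t)) * Rpower 2 (INR (m - t) / 2))
         (seq 1 m)).

From Stdlib Require Import Reals List Lra Lia ZArith.
Open Scope R_scope.

(* Put phi(j) := ln j + (j - 1) ln 2 = ln (j 2^(j-1)).  The whole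
   theorem rests on one discrete inequality, phi(j) <= j (ln 80) / 5 for every
   integer j >= 1 (equivalently j^5 2^j <= 2^5 5^j, with equality at j = 5),
   which is proved by induction from the ratio bound 2 (j+1)^5 <= 5 j^5, j >= 5.
   Averaging it over two consecutive integers k, k+1 with nonnegative weights
   a, b gives a phi(k) + b phi(k+1) <= (a k + b (k+1)) (ln 80) / 5.
   - With k = floor(1/d), a = (k+1)d - 1, b = 1 - kd (so a k + b (k+1) = 1 and
     a + b = d), the left side is ln 2 times E(d) + (1 - d): this bounds the
     objective by log 80 / 10; the value at d = 1/5 is computed directly.
   - With q = m div t, r = m mod t, a = t - r, b = r (so a q + b (q+1) = m), the
     left side is the logarithm of I(m,t) 2^(m-t): every term of the sum is at
     most 80^(m/10), hence the sum is at most m 80^(m/10).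
   Finally m 80^(m/10) = O(1.55^m) because 80 < 1.55^10. *)

Lemma ln2_pos : 0 < ln 2.
Proof. rewrite <- ln_1. apply ln_increasing; lra. Qed.

Lemma ln_le_compat : forall x y : R, 0 < x -> x <= y -> ln x <= ln y.
Proof. intros x y hx [h|h]; [left; apply ln_increasing; auto | subst; lra]. Qed.

Lemma exp_le_compat : forall x y : R, x <= y -> exp x <= exp y.
Proof. intros x y [h|h]; [left; apply exp_increasing; auto | subst; lra]. Qed.

Lemma pow5_ratio_step : forall i : nat, (2 * (i + 6) ^ 5 <= 5 * (i + 5) ^ 5)%nat.
Proof.
  intro i. apply Nat2Z.inj_le.
  rewrite !Nat2Z.inj_mul, !Nat2Z.inj_pow, !Nat2Z.inj_add.
  assert (0 <= Z.of_nat i)%Z by lia.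
  simpl Z.of_nat. nia.
Qed.

Lemma pow5_pow2_le : forall j : nat, (j ^ 5 * 2 ^ j <= 32 * 5 ^ j)%nat.
Proof.
  induction j as [|j IH].
  - simpl. lia.
  - destruct (le_lt_dec 5 j) as [h|h].
    + replace j with (j - 5 + 5)%nat in * by lia.
      pose proof (pow5_ratio_step (j - 5)) as step.
      rewrite (Nat.pow_succ_r' 2), (Nat.pow_succ_r' 5).
      replace (S (j - 5 + 5)) with (j - 5 + 6)%nat by lia.
      revert IH step.
      generalize ((j - 5 + 6) ^ 5)%nat ((j - 5 + 5) ^ 5)%nat
                 (2 ^ (j - 5 + 5))%nat (5 ^ (j - 5 + 5))%nat.
      intros. nia.
    + destruct j as [|[|[|[|[|j]]]]]; try lia; apply Nat.leb_le; reflexivity.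
Qed.

Definition phi (j : R) : R := ln j + (j - 1) * ln 2.

Lemma phi_le : forall j : nat, (1 <= j)%nat -> phi (INR j) <= INR j * ln 80 / 5.
Proof.
  intros j hj. unfold phi.
  assert (Hj : 0 < INR j) by (apply lt_0_INR; lia).
  pose proof (le_INR _ _ (pow5_pow2_le j)) as H.
  rewrite !mult_INR, !pow_INR in H.
  replace (INR 32) with (2 ^ 5) in H by (simpl; lra).
  replace (INR 2) with 2 in H by (simpl; lra).
  replace (INR 5) with 5 in H by (simpl; lra).
  apply ln_le_compat in H; [| apply Rmult_lt_0_compat; apply pow_lt; lra].
  rewrite !ln_mult, !ln_pow in H by (try apply pow_lt; lra).
  replace 80 with (2 ^ 4 * 5) by lra.
  rewrite ln_mult, ln_pow by (try apply pow_lt; lra).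
  simpl INR in *. lra.
Qed.

Lemma phi_mixture_le : forall (k : nat) (a b : R),
  (1 <= k)%nat -> 0 <= a -> 0 <= b ->
  a * phi (INR k) + b * phi (INR k + 1) <= (a * INR k + b * (INR k + 1)) * ln 80 / 5.
Proof.
  intros k a b hk ha hb.
  pose proof (phi_le k hk) as Hk.
  pose proof (phi_le (S k) ltac:(lia)) as Hk1. rewrite S_INR in Hk1.
  pose proof (Rmult_le_compat_l a _ _ ha Hk).
  pose proof (Rmult_le_compat_l b _ _ hb Hk1).
  lra.
Qed.

Lemma floor_inv_spec : forall d : R, 0 < d <= 1 ->
  exists k : nat, (1 <= k)%nat /\ IZR (floorR (/ d)) = INR k /\
                  INR k * d <= 1 <= (INR k + 1) * d.
Proof.
  intros d [hd hd1]. unfold floorR.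
  destruct (base_Int_part (/ d)) as [h1 h2].
  assert (hid : 1 <= / d) by (rewrite <- Rinv_1; apply Rinv_le_contravar; lra).
  assert (hz : (0 < Int_part (/ d))%Z) by (apply lt_IZR; lra).
  destruct (Z_of_nat_complete (Int_part (/ d))) as [k hk]; [lia|].
  exists k. rewrite hk, <- INR_IZR_INZ in *.
  repeat split; [lia | | ].
  - apply Rmult_le_reg_r with (/ d); [apply Rinv_0_lt_compat; lra|].
    rewrite Rmult_assoc, Rinv_r by lra. lra.
  - apply Rmult_le_reg_r with (/ d); [apply Rinv_0_lt_compat; lra|].
    rewrite Rmult_assoc, Rinv_r by lra. lra.
Qed.

Lemma obj_le : forall d : R, 0 < d <= 1 -> obj d <= log2 80 / 10.
Proof.
  intros d hd.
  destruct (floor_inv_spec d hd) as [k [hk [hkd [hlo hhi]]]].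
  unfold obj, E, log2. rewrite hkd.
  pose proof ln2_pos.
  pose proof (phi_mixture_le k ((INR k + 1) * d - 1) (1 - INR k * d) hk
                ltac:(lra) ltac:(lra)) as mix.
  unfold phi in mix. set (x := INR k) in *.
  replace (x + 1 - 1) with x in mix by ring.
  replace (((x + 1) * d - 1) * x + (1 - x * d) * (x + 1)) with 1 in mix by ring.
  apply Rmult_le_reg_r with (2 * ln 2); [lra|].
  replace ((((x + 1) * d - 1) * (ln x / ln 2) + (1 - x * d) * (ln (x + 1) / ln 2)
            + (1 - d)) / 2 * (2 * ln 2))
    with (((x + 1) * d - 1) * ln x + (1 - x * d) * ln (x + 1) + (1 - d) * ln 2)
    by (field; lra).
  replace (ln 80 / ln 2 / 10 * (2 * ln 2)) with (ln 80 / 5) by (field; lra).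
  lra.
Qed.

Lemma obj_one_fifth : obj (1 / 5) = log2 80 / 10.
Proof.
  unfold obj, E, log2, floorR.
  replace (/ (1 / 5)) with 5 by field.
  rewrite <- (Int_part_spec 5 5) by lra.
  replace 80 with (2 ^ 4 * 5) by lra.
  rewrite ln_mult, ln_pow by (try apply pow_lt; lra).
  pose proof ln2_pos. simpl INR. field. lra.
Qed.

Lemma sum_term_le : forall m t : nat, (1 <= t <= m)%nat ->
  sqrt (INR (Imt m t)) * Rpower 2 (INR (m - t) / 2) <= Rpower 80 (INR m / 10).
Proof.
  intros m t [ht1 htm]. unfold Imt.
  set (q := Nat.div m t).
  pose proof (Nat.div_mod m t ltac:(lia)) as Hdm.
  pose proof (Nat.mod_upper_bound m t ltac:(lia)) as Hr.
  fold q in Hdm. set (r := Nat.modulo m t) in *.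
  assert (hq : (1 <= q)%nat).
  { destruct q as [|q']; [|lia]. rewrite Nat.mul_0_r in Hdm. lia. }
  replace ((q + 1) * t - m)%nat with (t - r)%nat by nia.
  replace (m - q * t)%nat with r by nia.
  assert (Hm : INR m = INR q * INR t + INR r).
  { rewrite Hdm at 1. rewrite plus_INR, mult_INR. ring. }
  assert (Htr : INR r <= INR t) by (apply le_INR; lia).
  assert (Hq : 0 < INR q) by (apply lt_0_INR; lia).
  rewrite mult_INR, !pow_INR, plus_INR.
  change (INR 1) with 1.
  rewrite <- Rpower_sqrt by (apply Rmult_lt_0_compat; apply pow_lt; lra).
  unfold Rpower. rewrite <- exp_plus. apply exp_le_compat.
  rewrite ln_mult, !ln_pow by (try apply pow_lt; lra).
  rewrite !minus_INR by lia.
  pose proof (phi_mixture_le q (INR t - INR r) (INR r) hq ltac:(lra) (pos_INR r))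
    as mix.
  unfold phi in mix.
  replace (INR q + 1 - 1) with (INR q) in mix by ring.
  replace ((INR t - INR r) * INR q + INR r * (INR q + 1)) with (INR m) in mix
    by (rewrite Hm; ring).
  rewrite Hm. nra.
Qed.

Lemma sum_list_le : forall (f : nat -> R) (M : R) (l : list nat),
  (forall x, In x l -> f x <= M) ->
  fold_right Rplus 0 (map f l) <= INR (length l) * M.
Proof.
  intros f M l; induction l as [|a l IH]; intros H; cbn [map fold_right length].
  - simpl; lra.
  - rewrite S_INR.
    assert (f a <= M) by (apply H; left; auto).
    assert (fold_right Rplus 0 (map f l) <= INR (length l) * M)
      by (apply IH; intros; apply H; right; auto).
    lra.
Qed.

Lemma Ssum_le : forall m : nat, Ssum m <= INR m * Rpower 80 (INR m / 10).
Proof.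
  intro m. unfold Ssum.
  rewrite <- (length_seq m 1) at 2.
  apply sum_list_le. intros t Ht. apply in_seq in Ht.
  apply sum_term_le. lia.
Qed.

(* Since 80 < 1.55^10, the polynomial factor m is absorbed: m 80^(m/10) = O(1.55^m).
   Writing 1.55^m = 80^(m/10) e^(m eps/10) with eps > 0, use m eps/10 <= e^(m eps/10). *)
Lemma poly_exp_absorb : exists C : R, 0 < C /\
  forall m : nat, INR m * Rpower 80 (INR m / 10) <= C * (155 / 100) ^ m.
Proof.
  set (eps := 10 * ln (155 / 100) - ln 80).
  assert (he : 0 < eps).
  { assert (H : ln 80 < ln ((155 / 100) ^ 10)) by (apply ln_increasing; lra).
    rewrite ln_pow in H by lra. unfold eps. simpl INR in H. lra. }
  exists (10 / eps). split; [apply Rdiv_lt_0_compat; lra|].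
  intro m.
  rewrite <- Rpower_pow by lra. unfold Rpower.
  replace (INR m * ln (155 / 100)) with (INR m / 10 * ln 80 + INR m * eps / 10)
    by (unfold eps; field).
  rewrite exp_plus.
  pose proof (exp_ineq1_le (INR m * eps / 10)) as Hexp.
  pose proof (exp_pos (INR m / 10 * ln 80)).
  set (a := exp (INR m / 10 * ln 80)) in *.
  set (b := exp (INR m * eps / 10)) in *.
  assert (INR m <= 10 / eps * b).
  { apply Rmult_le_reg_l with (eps / 10); [apply Rdiv_lt_0_compat; lra|].
    field_simplify; lra. }
  nra.
Qed.

Theorem mainTheorem8 :
  ((forall d : R, 0 < d <= 1 -> obj d <= log2 80 / 10) /\
   obj (1 / 5) = log2 80 / 10) /\
  (exists (C : R) (c : nat), 0 < C /\
     forall m : nat, (1 <= m)%nat ->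
       Ssum m <= C * INR m ^ c * Rpower 80 (INR m / 10)) /\
  (exists C : R, 0 < C /\
     forall m : nat, (1 <= m)%nat -> Ssum m <= C * (155 / 100) ^ m).
Proof.
  split; [split; [exact obj_le | exact obj_one_fifth] | split].
  - exists 1, 1%nat. split; [lra|]. intros m _.
    rewrite pow_1, Rmult_1_l. apply Ssum_le.
  - destruct poly_exp_absorb as [C [hC HC]].
    exists C. split; [exact hC|]. intros m _.
    eapply Rle_trans; [apply Ssum_le | apply HC].
Qed.
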